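(* Let $\Psi$ be a finite set of contexts, $\psi_t$ a target context, and $D$ a distribution such that $D(x\mid\psi)>0$ for all $\psi\in\Psi$ and $x\models\psi$, and such that $\Psi$ is representative for $\psi_t$ with respect to every $h\in\mathcal{H}$. Then for every $\epsilon,\delta\in(0,1)$ there exist integers $t_\psi(\epsilon,\delta)$, $\psi\in\Psi$, such that if the training set $S$ contains, for every $\psi\in\Psi$, at least $t_\psi(\epsilon,\delta)$ examples with context $\psi$ (drawn i.i.d. from $D(x,y\mid\psi)$), then any $h\in\mathcal{H}$ minimizing $\sum_{\psi\in\Psi}L_{S,\psi}(h)$ satisfies $$\Pr\Big(L_{D,\psi_t}(h)>\min_{h'\in\mathcal{H}}\sum_{\psi\in\Psi}L_{S,\psi}(h')+\epsilon\Big)<\delta.$$ In particular, in the realizable setting (where some $h'\in\mathcal{H}$ has $\sum_{\psi}L_{S,\psi}(h')=0$) this gives $\Pr(L_{D,\psi_t}(h)>\epsilon)<\delta$.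
   Context: Let $X_1,\dots,X_n$ be Boolean variables and $\Phi=\{\phi_1,\dots,\phi_m\}$ candidate formulas; $\phi(c)=\bigwedge_{j:c_j=1}\phi_j$ for $c\in\{0,1\}^m$, $f_w(x)=\sum_jw_j\mathbb{1}[x\models\phi_j]$ for $w\in[-1,1]^m$. A context is a Boolean formula. The MAX-SAT classifier $h_{c,w}(x,\psi)=1$ iff $x\models\phi(c)\wedge\psi$ and $f_w(x)\ge f_w(x')$ for all $x'\models\phi(c)\wedge\psi$, else $0$; $\mathcal{H}$ is the set of these. A ground-truth $h^*\in\mathcal{H}$ labels examples, $y=h^*(x,\psi)$. $D(x\mid\psi)$ is a distribution over assignments satisfying $\psi$; $L_{D,\psi}(h)=\sum_x\mathbb{1}[h(x,\psi)\neq h^*(x,\psi)]D(x\mid\psi)$. For the training set $S$ of triples $(\psi_k,x_k,y_k)$, and $S_\psi$ the examples in $S$ with context $\psi$, $L_{S,\psi}(h)=\frac{1}{|S_\psi|}\sum_{(\psi,x,y)\in S_\psi}\mathbb{1}[h(x,\psi)\neq y]$. Representativeness: for $h\in\mathcal{H}$, let $\chi(\psi,x,\psi')$ hold iff $x\models\psi\wedge\psi'$ and ($h(x,\psi)\neq h^*(x,\psi)\Rightarrow h(x,\psi')\neq h^*(x,\psi')$); $\#(\psi,x)=|\{\psi'\in\Psi:\chi(\psi,x,\psi')\}|$; $\Psi$ is representative for $\psi_t$ w.r.t. $h$ iff $\#(\psi_t,x)>0$ for all assignments $x$. *)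

From HB Require Import structures.
From mathcomp Require Import all_boot all_order all_algebra.
From mathcomp Require Import reals.
Set Implicit Arguments. Unset Strict Implicit. Unset Printing Implicit Defensive.
Import Order.TTheory GRing.Theory Num.Theory.
Local Open Scope ring_scope.

Definition assign (n : nat) := {ffun 'I_n -> bool}.

(* A Boolean formula over X_1..X_n, represented semantically by its set of
   models; [x \in phi] means x |= phi. *)
Definition formula (n : nat) := {set assign n}.

Section MaxSat.
Variables (R : realType) (n m : nat) (Phi : 'I_m -> formula n).

Definition phi_c (c : {ffun 'I_m -> bool}) : formula n :=
  \bigcap_(j | c j) Phi j.

Definition f_w (w : 'I_m -> R) (x : assign n) : R :=
  \sum_(j < m) w j * (x \in Phi j)%:R.

Definition h_cw (c : {ffun 'I_m -> bool}) (w : 'I_m -> R)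
    (x : assign n) (psi : formula n) : bool :=
  (x \in phi_c c :&: psi) &&
  [forall x' : assign n, (x' \in phi_c c :&: psi) ==> (f_w w x' <= f_w w x)].

Definition valid_w (w : 'I_m -> R) : Prop := forall j, -1 <= w j <= 1.

Definition in_H (h : assign n -> formula n -> bool) : Prop :=
  exists (c : {ffun 'I_m -> bool}) (w : 'I_m -> R),
    valid_w w /\ forall x psi, h x psi = h_cw c w x psi.

Variable hstar : assign n -> formula n -> bool.

Definition chi (h : assign n -> formula n -> bool)
    (psi : formula n) (x : assign n) (psi' : formula n) : bool :=
  [&& x \in psi, x \in psi' &
      (h x psi != hstar x psi) ==> (h x psi' != hstar x psi')].

Definition num_chi (Psi : {set formula n}) (h : assign n -> formula n -> bool)
    (psi : formula n) (x : assign n) : nat :=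
  #|[set psi' in Psi | chi h psi x psi']|.

Definition representative (Psi : {set formula n}) (psi_t : formula n)
    (h : assign n -> formula n -> bool) : Prop :=
  forall x : assign n, x \in psi_t -> (0 < num_chi Psi h psi_t x)%N.

(* D : context -> conditional distribution D(. | psi) over assignments *)
Definition is_cond_distr (D : formula n -> assign n -> R) (psi : formula n)
    : Prop :=
  (forall x, 0 <= D psi x) /\ (forall x, x \notin psi -> D psi x = 0) /\
  \sum_(x : assign n) D psi x = 1.

Definition L_D (D : formula n -> assign n -> R) (psi : formula n)
    (h : assign n -> formula n -> bool) : R :=
  \sum_(x : assign n) (h x psi != hstar x psi)%:R * D psi x.

Definition ctx (Psi : {set formula n}) := {psi : formula n | psi \in Psi}.

(* A training set: for each psi in Psi, a tuple of k psi assignments with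
   context psi (labels are y = hstar x psi). *)
Definition sample (Psi : {set formula n}) (k : ctx Psi -> nat) :=
  {dffun forall i : ctx Psi, (k i).-tuple (assign n)}.

Definition L_S (Psi : {set formula n}) (k : ctx Psi -> nat) (S : sample k)
    (i : ctx Psi) (h : assign n -> formula n -> bool) : R :=
  (k i)%:R^-1 *
  \sum_(x <- S i) (h x (val i) != hstar x (val i))%:R.

Definition obj (Psi : {set formula n}) (k : ctx Psi -> nat) (S : sample k)
    (h : assign n -> formula n -> bool) : R :=
  \sum_(i : ctx Psi) L_S S i h.

(* Probability of an event on training sets, the examples with context psi
   being drawn i.i.d. from D(. | psi), independently across contexts. *)
Definition Pr_sample (D : formula n -> assign n -> R) (Psi : {set formula n})
    (k : ctx Psi -> nat) (E : sample k -> bool) : R :=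
  \sum_(S : sample k)
    (E S)%:R * \prod_(i : ctx Psi) \prod_(x <- S i) D (val i) x.

End MaxSat.

From HB Require Import structures.
From mathcomp Require Import all_boot all_order all_algebra.
From mathcomp Require Import ring lra.
From mathcomp Require Import reals.
Set Implicit Arguments. Unset Strict Implicit. Unset Printing Implicit Defensive.
Import Order.TTheory GRing.Theory Num.Theory.
Local Open Scope ring_scope.

(* Every assignment x |= psi has positive probability under D(. | psi), and there
   are finitely many of them, so once each context has enough examples, with
   probability at least 1 - delta every such x occurs in the sample of psi (union
   bound over the pairs (psi, x), each missed with probability
   (1 - D(x | psi))^(t_psi)).  On that event h* has empirical loss 0, hence so does
   the minimizer h, which therefore agrees with h* on every x |= psi, psi in Psi.
   Representativeness transfers this agreement to every x |= psi_t, so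
   L_{D,psi_t}(h) = 0 and neither bad event occurs. *)

Lemma expr_bernoulli_le1 (R : realFieldType) (q : R) (t : nat) : 0 <= q <= 1 ->
  q ^+ t * (1 + t%:R * (1 - q)) <= 1.
Proof.
move=> /andP[q_ge0 q_le1]; elim: t => [|t IHt]; first by rewrite mul0r addr0 mulr1.
have step : q ^+ t.+1 * (1 + t.+1%:R * (1 - q)) =
    q ^+ t * (1 + t%:R * (1 - q)) - q ^+ t * (t%:R + 1) * (1 - q) ^+ 2.
  by rewrite exprS -natr1 expr2; ring.
have : 0 <= q ^+ t * (t%:R + 1) * (1 - q) ^+ 2.
  by rewrite mulr_ge0 ?sqr_ge0 // mulr_ge0 ?exprn_ge0 // addr_ge0.
rewrite step; lra.
Qed.

Lemma expr_eventually_lt (R : archiRealFieldType) (q r : R) : 0 <= q < 1 -> 0 < r ->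
  exists t : nat, forall k, (t <= k)%N -> q ^+ k < r.
Proof.
move=> /andP[q_ge0 q_lt1] r_gt0.
have gap_gt0 : 0 < r * (1 - q) by rewrite mulr_gt0 // subr_gt0.
exists (Num.bound (r * (1 - q))^-1) => k bound_le_k.
rewrite -(ler_nat R) in bound_le_k.
have k_large : 1 < k%:R * (r * (1 - q)).
  rewrite -ltr_pdivrMr // div1r.
  by apply: lt_le_trans bound_le_k; rewrite archi_boundP // invr_ge0 ltW.
have := @expr_bernoulli_le1 R q k (ltac:(apply/andP; split; lra)).
have : 0 <= q ^+ k by rewrite exprn_ge0.
have : 0 <= k%:R :> R by [].
nra.
Qed.

Lemma sum_dffun_prod (R : comNzRingType) (I : finType) (T_ : I -> finType)
    (F : forall i, T_ i -> R) :
  \sum_(f : {dffun forall i, T_ i}) \prod_i F i (f i) = \prod_i \sum_(s : T_ i) F i s.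
Proof.
under [RHS]eq_bigr => i _ do rewrite (big_tag (fun i (s : T_ i) => F i s) i).
rewrite bigA_distr_big_dep.
pose P_ i := [ffun s : T_ i => F i s].
transitivity (\sum_(t : fprod T_) \prod_(i in I) P_ i (t i)).
  rewrite (reindex (@fprod_of_dffun _ T_)); last exact/onW_bij/fprod_of_dffun_bij.
  by apply: eq_bigr => f _; apply: eq_bigr => i _; rewrite ffunE fprodE.
rewrite (@big_fprod R 0 1 *%R +%R); apply: eq_bigr => g _; apply: eq_bigr => i _.
by case: (g i) => j s /=; rewrite /untag; case: eqP => // e; rewrite ffunE.
Qed.

Lemma sum_tuple_prod (R : comNzRingType) (T : finType) (k : nat) (f : T -> R) :
  \sum_(s : k.-tuple T) \prod_(y <- s) f y = (\sum_y f y) ^+ k.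
Proof.
rewrite -[in RHS](card_ord k) -prodr_const bigA_distr_bigA.
rewrite (reindex (fun g : {ffun 'I_k -> T} => [tuple g i | i < k])); last first.
  exists (fun s : k.-tuple T => [ffun i => tnth s i]) => [g _|s _].
    by apply/ffunP => i; rewrite ffunE tnth_mktuple.
  by apply: eq_from_tnth => i; rewrite tnth_mktuple ffunE.
apply: eq_bigr => g _; rewrite big_tuple; apply: eq_bigr => i _.
by rewrite tnth_mktuple.
Qed.

Lemma prod_neq_indicator (R : comNzRingType) (T : eqType) (x : T) (f : T -> R)
    (s : seq T) :
  \prod_(y <- s) ((y != x)%:R * f y) = (x \notin s)%:R * \prod_(y <- s) f y.
Proof.
elim: s => [|y s IHs]; first by rewrite !big_nil mul1r.
rewrite !big_cons IHs in_cons negb_or eq_sym.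
by case: (x == y); case: (x \in s); rewrite /= ?mul0r ?mul1r ?mulr0.
Qed.

Lemma cond_distr_le1 (R : realType) n (D : formula n -> assign n -> R) psi x :
  is_cond_distr D psi -> D psi x <= 1.
Proof.
move=> [D_ge0 [_ D_sum1]]; rewrite -D_sum1 (bigD1 x) //= lerDl.
exact: sumr_ge0.
Qed.

Definition covering n (Psi : {set formula n}) (k : ctx Psi -> nat) (S : sample k) :
    bool :=
  [forall i : ctx Psi, forall x : assign n, (x \in val i) ==> (x \in S i)].

Section Sampling.
Variables (R : realType) (n : nat) (Psi : {set formula n}).
Variable D : formula n -> assign n -> R.
Hypothesis D_distr : forall psi, psi \in Psi -> is_cond_distr D psi.
Implicit Types k : ctx Psi -> nat.

Lemma sample_weight_ge0 k (S : sample k) : 0 <= \prod_i \prod_(y <- S i) D (val i) y.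
Proof.
apply: prodr_ge0 => i _; apply: prodr_ge0 => y _.
by have [D_ge0 _] := D_distr (valP i).
Qed.

Lemma Pr_sample_le k (E F : sample k -> bool) :
  (forall S, E S -> F S) -> Pr_sample D E <= Pr_sample D F.
Proof.
move=> EF; apply: ler_sum => S _; apply: ler_wpM2r; first exact: sample_weight_ge0.
by rewrite ler_nat; case: (E S) (EF S) => // ->.
Qed.

Lemma Pr_sample_union_bound k (A : finType) (P : pred A) (F : A -> sample k -> bool)
    (E : sample k -> bool) :
  (forall S, E S -> exists2 a, P a & F a S) ->
  Pr_sample D E <= \sum_(a | P a) Pr_sample D (F a).
Proof.
move=> EF; rewrite /Pr_sample exchange_big /=.
apply: ler_sum => S _; rewrite -mulr_suml.
apply: ler_wpM2r; first exact: sample_weight_ge0.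
case ES: (E S); last exact: sumr_ge0.
have [a Pa Fa] := EF S ES; rewrite (bigD1 a) //= Fa lerDl; exact: sumr_ge0.
Qed.

Lemma Pr_sample_miss k (i : ctx Psi) (x : assign n) :
  Pr_sample D (fun S : sample k => x \notin S i) = (1 - D (val i) x) ^+ k i.
Proof.
have [_ [_ D_sum1]] := D_distr (valP i).
have miss_x : \sum_y (y != x)%:R * D (val i) y = 1 - D (val i) x.
  rewrite -[in RHS]D_sum1 (bigD1 x) //= [X in _ = X - _](bigD1 x) //= eqxx mul0r.
  by rewrite add0r addrC addrK; apply: eq_bigr => y ->; rewrite mul1r.
pose G j (s : (k j).-tuple (assign n)) :=
  if j == i then \prod_(y <- s) ((y != x)%:R * D (val j) y)
  else \prod_(y <- s) D (val j) y.
transitivity (\sum_(S : sample k) \prod_j G j (S j)).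
  apply: eq_bigr => S _.
  rewrite (bigD1 i) //= [in RHS](bigD1 i) //= /G eqxx prod_neq_indicator -mulrA.
  by congr (_ * (_ * _)); apply: eq_bigr => j /negbTE ->.
rewrite (@sum_dffun_prod R _ _ G) (bigD1 i) //=.
rewrite [X in _ * X]big1 ?mulr1 => [|j /negbTE j_neq_i].
  by rewrite /G eqxx sum_tuple_prod miss_x.
have [_ [_ D_sum1_j]] := D_distr (valP j).
by rewrite /G j_neq_i sum_tuple_prod D_sum1_j expr1n.
Qed.

Lemma Pr_sample_uncovered_le k :
  Pr_sample D (fun S : sample k => ~~ covering S) <=
  \sum_(a : ctx Psi * assign n | a.2 \in val a.1) (1 - D (val a.1) a.2) ^+ k a.1.
Proof.
under eq_bigr => a _ do rewrite -(Pr_sample_miss k).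
apply: Pr_sample_union_bound => S /forallPn[i /forallPn[x]].
by rewrite negb_imply => /andP[x_i x_S]; exists (i, x).
Qed.

Hypothesis D_pos : forall psi x, psi \in Psi -> x \in psi -> 0 < D psi x.

Lemma Pr_sample_uncovered_lt (delta : R) : 0 < delta ->
  exists t : nat, forall k, (forall i, (t <= k i)%N) ->
    Pr_sample D (fun S : sample k => ~~ covering S) < delta.
Proof.
move=> delta_gt0; pose r := delta / #|{: ctx Psi * assign n}|.+1%:R.
have r_gt0 : 0 < r by rewrite divr_gt0.
have miss_small (a : ctx Psi * assign n) : exists t : nat, forall kk,
    (t <= kk)%N -> a.2 \in val a.1 -> (1 - D (val a.1) a.2) ^+ kk < r.
  case: a => [i x] /=; case x_i: (x \in val i); last by exists 0%N.
  have D_gt0 := D_pos (valP i) x_i.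
  have D_le1 := cond_distr_le1 x (D_distr (valP i)).
  have [t t_P] := @expr_eventually_lt R (1 - D (val i) x) r
    (ltac:(apply/andP; split; lra)) r_gt0.
  by exists t => kk /t_P.
have [t_ t_P] := fin_all_exists miss_small; exists (\max_a t_ a) => k k_ge.
apply: le_lt_trans (Pr_sample_uncovered_le k) _.
apply: (@le_lt_trans _ _ (\sum_(a : ctx Psi * assign n) r)).
  rewrite big_mkcond /=; apply: ler_sum => a _.
  case: ifP => [a_in|_]; last exact: ltW.
  apply/ltW/t_P => //; apply: leq_trans (k_ge a.1); exact: leq_bigmax.
rewrite sumr_const -mulr_natl /r mulrA ltr_pdivrMr ?ltr0n //.
by rewrite mulrC ltr_pM2l // ltr_nat.
Qed.

End Sampling.

Section EmpiricalLoss.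
Variables (R : realType) (n : nat) (hstar : assign n -> formula n -> bool).
Variables (Psi : {set formula n}) (k : ctx Psi -> nat) (S : sample k).

Lemma L_S_ge0 i h : 0 <= L_S R hstar S i h.
Proof. by rewrite mulr_ge0 ?invr_ge0 ?sumr_ge0. Qed.

Lemma obj_ge0 h : 0 <= obj R hstar S h.
Proof. by rewrite sumr_ge0 // => i _; apply: L_S_ge0. Qed.

Lemma obj_hstar : obj R hstar S hstar = 0.
Proof. by apply: big1 => i _; rewrite /L_S big1 ?mulr0 // => y _; rewrite eqxx. Qed.

Lemma obj_eq0_agree h : obj R hstar S h = 0 ->
  forall i x, x \in S i -> h x (val i) = hstar x (val i).
Proof.
move=> obj0 i x x_S.
have k_gt0 : (0 < k i)%N.
  by rewrite -(size_tuple (S i)) (leq_ltn_trans (leq0n (index x (S i)))) ?index_mem.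
have /eqP := psumr_eq0P (fun j _ => L_S_ge0 j h) obj0 (i := i) isT.
rewrite mulf_eq0 invr_eq0 pnatr_eq0 eqn0Ngt k_gt0 /= psumr_eq0 // => /allP/(_ x x_S).
by rewrite /= pnatr_eq0 eqb0 negbK => /eqP.
Qed.

Lemma covering_agree h : covering S -> obj R hstar S h = 0 ->
  forall psi x, psi \in Psi -> x \in psi -> h x psi = hstar x psi.
Proof.
move=> cov obj0 psi x psi_in x_psi.
apply: (obj_eq0_agree obj0 (i := exist _ psi psi_in)).
by move/forallP/(_ (exist _ psi psi_in))/forallP/(_ x)/implyP: cov; apply.
Qed.

End EmpiricalLoss.

Lemma representative_L_D_eq0 (R : realType) n (hstar : assign n -> formula n -> bool)
    (Psi : {set formula n}) (psi_t : formula n) (D : formula n -> assign n -> R)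
    (h : assign n -> formula n -> bool) :
  is_cond_distr D psi_t -> representative hstar Psi psi_t h ->
  (forall psi x, psi \in Psi -> x \in psi -> h x psi = hstar x psi) ->
  L_D hstar D psi_t h = 0.
Proof.
move=> [_ [D_out _]] rep agree; apply: big1 => x _.
have [x_t|x_nt] := boolP (x \in psi_t); last by rewrite D_out ?mulr0.
have /set0Pn[psi'] : [set psi' in Psi | chi hstar h psi_t x psi'] != set0.
  by rewrite -card_gt0; apply: rep.
rewrite inE => /andP[psi'_in /and3P[_ x_psi' err_transfer]].
move: err_transfer; rewrite (agree psi') // eqxx implybF negbK => /eqP ->.
by rewrite eqxx mul0r.
Qed.

Theorem theorem4 (R : realType) (n m : nat) (Phi : 'I_m -> formula n)
    (hstar : assign n -> formula n -> bool)
    (Psi : {set formula n}) (psi_t : formula n)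
    (D : formula n -> assign n -> R) :
  in_H R Phi hstar ->
  (forall psi, psi \in Psi -> is_cond_distr D psi) ->
  is_cond_distr D psi_t ->
  (forall psi x, psi \in Psi -> x \in psi -> 0 < D psi x) ->
  (forall h, in_H R Phi h -> representative hstar Psi psi_t h) ->
  forall eps delta : R, 0 < eps < 1 -> 0 < delta < 1 ->
  exists t : ctx Psi -> nat,
  forall k : ctx Psi -> nat, (forall i, (t i <= k i)%N) ->
  forall erm : sample k -> (assign n -> formula n -> bool),
    (forall S, in_H R Phi (erm S)) ->
    (forall S h', in_H R Phi h' -> obj R hstar S (erm S) <= obj R hstar S h') ->
    Pr_sample D (fun S => obj R hstar S (erm S) + eps < L_D hstar D psi_t (erm S))
      < delta
    /\
    Pr_sample D (fun S => eps < L_D hstar D psi_t (erm S)) < delta.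
Proof.
move=> hstar_H D_distr D_t D_pos rep eps delta /andP[eps_gt0 _] /andP[delta_gt0 _].
have [t t_P] := Pr_sample_uncovered_lt D_distr D_pos delta_gt0.
exists (fun=> t) => k k_ge erm erm_H erm_min.
have erm_exact S : covering S ->
    L_D hstar D psi_t (erm S) = 0 /\ obj R hstar S (erm S) = 0.
  move=> cov; have obj0 : obj R hstar S (erm S) = 0.
    by apply/eqP; rewrite eq_le obj_ge0 -(obj_hstar R hstar S) erm_min.
  split=> //; apply: representative_L_D_eq0 D_t (rep _ (erm_H S)) _.
  exact: covering_agree cov obj0.
split; apply: le_lt_trans (t_P k k_ge); apply: (Pr_sample_le D_distr) => S;
  by apply: contraTN => /erm_exact[L0 obj0]; rewrite L0 ?obj0 -leNgt; lra.
Qed.
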